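(* In the standard LLP setup, for every $N\ge1$: $K^\uparrow\neq\emptyset$ if and only if $L(G,\gamma^N_{cons})\subseteq\overline{K^\uparrow}$.
   Context: Standard LLP setup. $\Sigma=\Sigma_c\,\dot\cup\,\Sigma_{uc}$ is a finite alphabet partitioned into controllable and uncontrollable events. The plant $G$ has generated language $L(G)$ and marked language $L_m(G)$ with $L(G)=\overline{L_m(G)}$ ($\overline{M}$ = set of prefixes of strings in $M$). The legal language $K\subseteq L_m(G)$ satisfies $K=\overline{K}\cap L_m(G)$. For a prefix-closed $L$, $M$ is controllable w.r.t. $L$ if $\overline{M}\Sigma_{uc}\cap L\subseteq\overline{M}$; $K^\uparrow$ is the supremal sublanguage of $K$ controllable w.r.t. $L(G)$. For a language $L$ and $s\in\Sigma^*$: $L/s=\{t: st\in L\}$; $L|_N=\{t\in L:|t|\le N\}$; $\Sigma_{L(G)}(s)=\{\sigma\in\Sigma: s\sigma\in L(G)\}$. $M^{\uparrow/s|_N}$ is the supremal sublanguage of $M$ controllable w.r.t. $L(G)/s|_N$. Conservative attitude: $f^N_{cons}(s)=[K/s|_{N-1}]^{\uparrow/s|_N}$; control policy $\gamma^N_{cons}(s)=(\overline{f^N_{cons}(s)}\cap\Sigma)\cup(\Sigma_{uc}\cap\Sigma_{L(G)}(s))$. Closed-loop language $L(G,\gamma)$: $\epsilon\in L(G,\gamma)$, and $s\sigma\in L(G,\gamma)$ iff $s\in L(G,\gamma)$, $s\sigma\in L(G)$, $\sigma\in\gamma(s)$. *)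

From mathcomp Require Import all_boot.
Set Implicit Arguments. Unset Strict Implicit. Unset Printing Implicit Defensive.

Section LLP.
Variable Sigma : finType.

Definition lang := seq Sigma -> Prop.

Definition pref (M : lang) : lang := fun s => exists t, M (s ++ t).

Definition subl (M K : lang) : Prop := forall s, M s -> K s.

(* ctrl sigma = true  iff  sigma \in Sigma_c ; Sigma_uc is the complement. *)
Variable ctrl : pred Sigma.

Definition controllable (L M : lang) : Prop :=
  forall s sigma, pref M s -> ~~ ctrl sigma -> L (rcons s sigma) ->
    pref M (rcons s sigma).

Definition supC (L K : lang) : lang :=
  fun s => exists M : lang, subl M K /\ controllable L M /\ M s.

Definition quot (L : lang) (s : seq Sigma) : lang := fun t => L (s ++ t).

Definition trunc (L : lang) (N : nat) : lang := fun t => L t /\ size t <= N.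

(* Conservative attitude:
   f^N_cons(s) = [K/s|_{N-1}]^{\uparrow/s|_N}, the supremal sublanguage of
   K/s|_{N-1} controllable w.r.t. L(G)/s|_N. *)
Definition fcons (LG K : lang) (N : nat) (s : seq Sigma) : lang :=
  supC (trunc (quot LG s) N) (trunc (quot K s) N.-1).

(* Control policy
   gamma^N_cons(s) = (\overline{f^N_cons(s)} \cap Sigma) \cup (Sigma_uc \cap Sigma_{L(G)}(s)). *)
Definition gamma_cons (LG K : lang) (N : nat) (s : seq Sigma) (sigma : Sigma) : Prop :=
  pref (fcons LG K N s) [:: sigma] \/ (~~ ctrl sigma /\ LG (rcons s sigma)).

Inductive closed_loop (LG : lang) (gamma : seq Sigma -> Sigma -> Prop) : lang :=
| cl_nil : closed_loop LG gamma [::]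
| cl_rcons : forall s sigma, closed_loop LG gamma s -> LG (rcons s sigma) ->
    gamma s sigma -> closed_loop LG gamma (rcons s sigma).

End LLP.

From mathcomp Require Import all_boot.

(* Proof of theorem4 (non-blocking of the conservative LLP supervisor).
   "<-": the empty string lies in every closed loop, hence in the prefix
   closure of K^up, so K^up contains some string.
   "->": by induction on closed-loop strings s.sigma we show
   s.sigma \in \overline{K^up}.  If sigma is uncontrollable this is the
   controllability of K^up itself (supC_controllable).  If sigma is enabled by
   f^N_cons(s), there is a controllable M \subseteq K/s|_{N-1} with
   sigma.t \in M; the extension lemma shows that K^up \cup s.M is a
   controllable sublanguage of K (its words after s have length < N, so the
   truncation to N does not cut off their uncontrollable continuations), so by
   maximality s.sigma.t \in K^up. *)

Lemma cat_split (T : Type) (x t s w : seq T) : x ++ t = s ++ w ->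
  (exists y, s = x ++ y) \/ (exists y, x = s ++ y /\ y ++ t = w).
Proof.
elim: x s => [|a x IH] [|b s] /=.
- by move=> _; left; exists [::].
- by move=> _; left; exists (b :: s).
- by move=> E; right; exists (a :: x).
- case=> -> /IH [[y ->]|[y [-> E]]].
  + by left; exists y.
  + by right; exists y.
Qed.

Section Supervisor.
Variables (Sigma : finType) (ctrl : pred Sigma).
Implicit Types (L K M A : lang Sigma) (s x y : seq Sigma).

Lemma pref_catl M x y : pref M (x ++ y) -> pref M x.
Proof. by case=> t Mxyt; exists (y ++ t); rewrite catA. Qed.

Definition langU A M : lang Sigma := fun z => A z \/ M z.

Definition lcat s M : lang Sigma := fun z => exists w, M w /\ z = s ++ w.

Lemma pref_lcat s M z : pref (lcat s M) z ->
  (exists y, s = z ++ y) \/ (exists y, z = s ++ y /\ pref M y).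
Proof.
case=> t [w [Mw /cat_split [|[y [-> yt_w]]]]]; first by left.
by right; exists y; split=> //; exists t; rewrite yt_w.
Qed.

Lemma supC_sub L K : subl (supC ctrl L K) K.
Proof. by move=> s [M [MK [_ Ms]]]; apply: MK. Qed.

Lemma supC_controllable {L K} : controllable ctrl L (supC ctrl L K).
Proof.
move=> s u [t [M [MK [cM Mst]]]] nu Lsu.
have [t' Msut'] : pref M (rcons s u) by apply: cM => //; exists t.
by exists t'; exists M.
Qed.

Lemma supC_max {L K M} : subl M K -> controllable ctrl L M -> subl M (supC ctrl L K).
Proof. by move=> MK cM s Ms; exists M. Qed.

Lemma controllable_extend {L A M s N} :
  controllable ctrl L A -> pref A s ->
  controllable ctrl (trunc (quot L s) N) M -> (forall w, M w -> size w < N) ->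
  controllable ctrl L (langU A (lcat s M)).
Proof.
move=> cA As cM shortM x v [t [Axt|sMxt]] nv Lxv.
- have [t' Axvt'] : pref A (rcons x v) by apply: cA => //; exists t.
  by exists t'; left.
- have sMx : pref (lcat s M) x by exists t.
  case/pref_lcat: sMx => [[y s_xy]|[y [x_sy My]]].
  + have Ax : pref A x by apply: (@pref_catl _ x y); rewrite -s_xy.
    have [t' Axvt'] := cA x v Ax nv Lxv.
    by exists t'; left.
  + have y_short : size y < N.
      case: My => t' /shortM; rewrite size_cat.
      exact: leq_ltn_trans (leq_addr _ _).
    have [t' Myvt'] : pref M (rcons y v).
      apply: cM => //; split; first by rewrite /quot -rcons_cat -x_sy.
      by rewrite size_rcons.
    by exists t'; right; exists (rcons y v ++ t'); rewrite x_sy rcons_cat catA.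
Qed.

Variables (LG K : lang Sigma) (N : nat).

Lemma fcons_step s sigma : 0 < N -> pref (supC ctrl LG K) s ->
  pref (fcons ctrl LG K N s) [:: sigma] -> pref (supC ctrl LG K) (rcons s sigma).
Proof.
move=> N_gt0 Ks [t [M [MK [cM Msigt]]]].
have shortM w : M w -> size w < N.
  by case/MK=> _ w_le; apply: leq_ltn_trans w_le _; rewrite ltn_predL.
have sMK : subl (langU (supC ctrl LG K) (lcat s M)) K.
  move=> z [/supC_sub //|[w [Mw ->]]].
  by case: (MK _ Mw).
have cU := controllable_extend supC_controllable Ks cM shortM.
exists t; apply: (supC_max sMK cU); right.
by exists (sigma :: t); rewrite cat_rcons.
Qed.

End Supervisor.

Theorem theorem4 (Sigma : finType) (ctrl : pred Sigma) (LmG LG K : lang Sigma)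
  (hLG : forall s, LG s <-> pref LmG s)
  (hK : subl K LmG)
  (hKclosed : forall s, K s <-> pref K s /\ LmG s)
  (N : nat) (hN : 1 <= N) :
  (exists s, supC ctrl LG K s) <->
  subl (closed_loop LG (gamma_cons ctrl LG K N)) (pref (supC ctrl LG K)).
Proof.
split=> [[s0 Ks0] x|closed_in].
- elim=> [|s sigma _ Ks Lssig [enabled|[unctrl _]]].
  + by exists s0.
  + exact: fcons_step hN Ks enabled.
  + exact: supC_controllable Ks unctrl Lssig.
- by have [t Kt] := closed_in [::] (cl_nil _ _); exists t.
Qed.
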